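(* For every integer $q'\ge2$, the network $\mathcal{N}_2$ (with parameter $q'$) has a $3$-dimensional VLNC solution over every finite field.
   Context: Vector linear network coding: each source $v$ generates $x_v\in F^d$; an edge out of a source $v$ carries $Ax_v$ for a $d\times d$ matrix $A$ over $F$; an edge out of an intermediate node carries $\sum A_{e',e}y_{e'}$ over the edges $e'$ entering that node; a terminal computes vectors $\sum B_ey_e$ over its incoming edges; a $d$-dimensional VLNC solution over $F$ is such a code with which every terminal computes each demanded message for all message choices. The Char-$q$-$s$ network (integer $q\ge2$): sources $s,x_1,\dots,x_{q+2}$; intermediate nodes $m_1,\dots,m_{q+3},n_1,\dots,n_{q+3}$; terminals $r_1,\dots,r_{q+3}$; edges: $(x_1,m_i)$ for $1\le i\le q+1$; $(s,m_1)$ and $(s,m_i)$ for $4\le i\le q+3$; $(x_i,m_j)$ for $2\le i,j\le q+2$, $i\ne j$; $(x_i,m_{q+3})$ for $1\le i\le q+2$; $e_i=(m_i,n_i)$ for $1\le i\le q+3$; $(n_i,r_i)$ for $1\le i\le q+2$; $(n_{q+3},r_i)$ and $(n_i,r_{q+3})$ for $1\le i\le q+2$; $(x_i,r_1)$ for $2\le i\le q+1$; $(x_1,r_{q+2})$; $(s,r_2)$; $(s,r_3)$. Demands: $r_1$ demands $x_{q+2}$; $r_i$ demands $x_i$ for $2\le i\le q+2$; $r_{q+3}$ demands $x_1$; no terminal demands $s$. The generalized M-network $\mathcal{M}_3$: sources in three groups $G_1=(\bar a,\bar b,\bar c)$, $G_2=(\bar r,\bar s,\bar w)$, $G_3=(\bar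 x,\bar y,\bar z)$; intermediate nodes $\bar u_1,\bar u_2,\bar u_3,\bar v_1,\dots,\bar v_5$; edges from each source of $G_i$ to $\bar u_i$, edges $(\bar u_i,\bar v_i),(\bar u_i,\bar v_4),(\bar u_i,\bar v_5)$ for $i=1,2,3$, and $(\bar v_i,\bar t_j)$ for $1\le i\le5$, $1\le j\le27$; terminals $\bar t_1,\dots,\bar t_{27}$, where $\bar t_j$ demands the $j$-th triple in the lexicographic order of $G_1\times G_2\times G_3$ (e.g. $\bar t_1$: $\bar a,\bar r,\bar x$; $\bar t_2$: $\bar a,\bar r,\bar y$; $\bar t_4$: $\bar a,\bar s,\bar x$; $\bar t_{25}$: $\bar c,\bar w,\bar x$; $\bar t_{27}$: $\bar c,\bar w,\bar z$). The network $\mathcal{N}_2$ (integer $q'\ge2$) is obtained from the disjoint union of $\mathcal{M}_3$ and a copy of the Char-$q'$-$s$ network (nodes renamed $\bar m_i,\bar n_i$, terminals $\rho_i$, edges $\bar e_i=(\bar m_i,\bar n_i)$, sources $x_i$ renamed $\bar x_i$ for $2\le i\le q'+2$) by identifying $x_1$ with $\bar a$ and $s$ with $\bar x$ (so $\rho_{q'+3}$ demands $\bar a$), and adding the edges: $(\bar w,\bar t_j)$ for $j\in\{7,8,9,16,17,18\}$; $(\bar c,\bar t_j)$ for $19\le j\le24$; $(\bar a,\bar t_{25})$; $(\bar y,\bar t_{26})$; $(\bar n_1,\bar t_{25})$. All other demands are unchanged. *)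

From HB Require Import structures.
From mathcomp Require Import all_boot all_order all_algebra all_field.
Set Implicit Arguments. Unset Strict Implicit. Unset Printing Implicit Defensive.
Import GRing.Theory.
Local Open Scope ring_scope.

(* A network on a finite node type V: edge relation E (an edge is an        *)
(* ordered pair of nodes, no parallel edges), source predicate src, and     *)
(* demand relation dem t x ("terminal t demands the message of source x").  *)
(*   A u v    : coefficient of edge (u,v) out of a source u  (y = A x_u)     *)
(*   C w u v  : coefficient A_{e',e} with e' = (w,u), e = (u,v)              *)
(*   B t x u  : decoding coefficient used by terminal t for demanded         *)
(*              message x on its incoming edge (u,t)                         *)

Definition vlnc_edge_eqs (F : fieldType) (V : finType) (d : nat)
    (E : rel V) (src : pred V)
    (A : V -> V -> 'M[F]_d) (C : V -> V -> V -> 'M[F]_d)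
    (msg : V -> 'cV[F]_d) (y : V -> V -> 'cV[F]_d) : Prop :=
  forall u v, E u v ->
    (src u -> y u v = A u v *m msg u) /\
    (~~ src u -> y u v = \sum_(w | E w u) C w u v *m y w u).

Definition vlnc_decodes (F : fieldType) (V : finType) (d : nat)
    (E : rel V) (dem : rel V)
    (B : V -> V -> V -> 'M[F]_d)
    (msg : V -> 'cV[F]_d) (y : V -> V -> 'cV[F]_d) : Prop :=
  forall t x, dem t x -> \sum_(u | E u t) B t x u *m y u t = msg x.

Definition has_VLNC_solution (F : fieldType) (d : nat) (V : finType)
    (E : rel V) (src : pred V) (dem : rel V) : Prop :=
  exists (A : V -> V -> 'M[F]_d) (C : V -> V -> V -> 'M[F]_d)
         (B : V -> V -> V -> 'M[F]_d),
  forall msg : V -> 'cV[F]_d,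
    (exists y, vlnc_edge_eqs E src A C msg y) /\
    (forall y, vlnc_edge_eqs E src A C msg y -> vlnc_decodes E dem B msg y).

(* The network N_2 with parameter q (= q' of the paper).                     *)
(* Nodes are pairs (kind, index) with 1-based indices as in the paper;     *)
(* unused pairs are isolated, non-source, undemanded nodes (irrelevant).   *)

Definition node (q : nat) := ('I_8 * 'I_(q + 27).+1)%type.

Definition Kx   : 'I_8 := inord 0. (* Char-q-s sources  x̄_i, 2 <= i <= q+2 *)
Definition Km   : 'I_8 := inord 1. (* m̄_i, 1 <= i <= q+3 *)
Definition Kn   : 'I_8 := inord 2. (* n̄_i, 1 <= i <= q+3 *)
Definition Krho : 'I_8 := inord 3. (* terminals ρ_i, 1 <= i <= q+3 *)
Definition Ksrc : 'I_8 := inord 4. (* M_3 sources: 1..9 = a,b,c,r,s,w,x,y,z *)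
Definition Ku   : 'I_8 := inord 5. (* ū_1..ū_3 *)
Definition Kv   : 'I_8 := inord 6. (* v̄_1..v̄_5 *)
Definition Kt   : 'I_8 := inord 7. (* terminals t̄_1..t̄_27 *)

Definition nd (q : nat) (k : 'I_8) (i : nat) : node q := (k, inord i).

(* M_3 sources; group G_1 = (a,b,c), G_2 = (r,s,w), G_3 = (x,y,z). *)
Definition srcM q (j : nat) : node q := nd q Ksrc j.
Definition sa q := srcM q 1.
Definition sc q := srcM q 3.
Definition sw q := srcM q 6.
Definition sx q := srcM q 7.
Definition sy q := srcM q 8.

(* Char-q-s nodes; x_1 is identified with ā and s with x̄. *)
Definition chx q (i : nat) : node q := if i == 1%N then sa q else nd q Kx i.
Definition chs q : node q := sx q.
Definition mm q i := nd q Km i.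
Definition nn q i := nd q Kn i.
Definition rho q i := nd q Krho i.
Definition uu q i := nd q Ku i.
Definition vv q i := nd q Kv i.
Definition tt q i := nd q Kt i.

Definition N2_edges (q : nat) : seq (node q * node q) :=
  [seq (chx q 1, mm q i) | i <- iota 1 (q + 1)] ++
  [:: (chs q, mm q 1)] ++
  [seq (chs q, mm q i) | i <- iota 4 q] ++
  [seq (chx q p.1, mm q p.2) |
     p <- [seq (i, j) | i <- iota 2 (q + 1), j <- iota 2 (q + 1)] & p.1 != p.2] ++
  [seq (chx q i, mm q (q + 3)) | i <- iota 1 (q + 2)] ++
  [seq (mm q i, nn q i) | i <- iota 1 (q + 3)] ++
  [seq (nn q i, rho q i) | i <- iota 1 (q + 2)] ++
  [seq (nn q (q + 3), rho q i) | i <- iota 1 (q + 2)] ++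
  [seq (nn q i, rho q (q + 3)) | i <- iota 1 (q + 2)] ++
  [seq (chx q i, rho q 1) | i <- iota 2 q] ++
  [:: (chx q 1, rho q (q + 2)); (chs q, rho q 2); (chs q, rho q 3)] ++
  [seq (srcM q j, uu q ((j + 2) %/ 3)) | j <- iota 1 9] ++
  [seq (uu q i, vv q i) | i <- iota 1 3] ++
  [seq (uu q i, vv q 4) | i <- iota 1 3] ++
  [seq (uu q i, vv q 5) | i <- iota 1 3] ++
  [seq (vv q p.1, tt q p.2) | p <- [seq (i, j) | i <- iota 1 5, j <- iota 1 27]] ++
  [seq (sw q, tt q j) | j <- [:: 7; 8; 9; 16; 17; 18]%N] ++
  [seq (sc q, tt q j) | j <- iota 19 6] ++
  [:: (sa q, tt q 25); (sy q, tt q 26); (nn q 1, tt q 25)].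

Definition N2_E (q : nat) : rel (node q) := fun u v => (u, v) \in N2_edges q.

Definition N2_sources (q : nat) : seq (node q) :=
  [seq srcM q j | j <- iota 1 9] ++ [seq nd q Kx i | i <- iota 2 (q + 1)].

Definition N2_src (q : nat) : pred (node q) := fun v => v \in N2_sources q.

(* Demands.  ρ_1 demands x̄_{q+2}; ρ_i demands x̄_i (2 <= i <= q+2);         *)
(* ρ_{q+3} demands x_1 = ā; t̄_j demands the j-th triple of G_1 x G_2 x G_3 *)
(* in lexicographic order: for j - 1 = 9 α + 3 β + γ (0 <= α,β,γ <= 2) the *)
(* triple is (G_1[α], G_2[β], G_3[γ]) = sources α+1, β+4, γ+7.              *)
Definition N2_demands (q : nat) : seq (node q * node q) :=
  [:: (rho q 1, chx q (q + 2))] ++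
  [seq (rho q i, chx q i) | i <- iota 2 (q + 1)] ++
  [:: (rho q (q + 3), chx q 1)] ++
  flatten [seq [:: (tt q (9 * p.1.1 + 3 * p.1.2 + p.2 + 1), srcM q (p.1.1 + 1));
                   (tt q (9 * p.1.1 + 3 * p.1.2 + p.2 + 1), srcM q (p.1.2 + 4));
                   (tt q (9 * p.1.1 + 3 * p.1.2 + p.2 + 1), srcM q (p.2 + 7))]
          | p <- [seq (ab, g) | ab <- [seq (a, b) | a <- iota 0 3, b <- iota 0 3],
                                g <- iota 0 3]].

Definition N2_dem (q : nat) : rel (node q) := fun t x => (t, x) \in N2_demands q.

From HB Require Import structures.
From mathcomp Require Import all_boot all_order all_algebra all_field.
From mathcomp Require Import zify.
Set Implicit Arguments. Unset Strict Implicit. Unset Printing Implicit Defensive.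
Import GRing.Theory.
Local Open Scope ring_scope.

(* The network N_2 has a 3-dimensional vector linear solution over every
   field F, given by an explicit code in which every source sends its
   message unchanged.
   - Char-q'-s part (used coordinatewise, s = x̄ is ignored): with
     X = {x_1 = ā, x_2, ..., x_{q'+2}}, the node m_i forwards the plain sum of
     the messages of S_1 = {x_1}, S_i = X \ {x_i} (2 <= i <= q'+1),
     S_{q'+2} = X \ {x_1, x_{q'+2}}, S_{q'+3} = X, and n_i forwards m_i.
     Every terminal ρ_i recovers its message as a (+1/-1)-combination of its
     inputs (e.g. x_i = n_{q'+3} - n_i), so no characteristic is excluded.
   - M_3 part: ū_g sends to v̄_g the vector of the 0-th coordinates of the
     three sources of G_g, and to v̄_4 (v̄_5) that of their 1st (2nd)
     coordinates; v̄_g forwards, and v̄_4, v̄_5 send to t̄_j the three entries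
     belonging to the sources demanded by t̄_j.  Terminal t̄_j reassembles a
     demanded message from one entry of each of v̄_g, v̄_4, v̄_5. *)

Lemma big_masked_mulmx (R : pzSemiRingType) (T : finType) (m n p : nat)
    (P Q : pred T) (N : T -> 'M[R]_(m, n)) (Y : T -> 'M[R]_(n, p)) :
  (forall w, Q w -> P w) ->
  \sum_(w | P w) (if Q w then N w else 0) *m Y w = \sum_(w | Q w) N w *m Y w.
Proof.
move=> sQP; rewrite big_mkcond [RHS]big_mkcond; apply: eq_bigr => w _.
case: ifP => Pw; first by case: ifP => _; rewrite ?mul0mx.
by case: ifP => // /sQP; rewrite Pw.
Qed.

Lemma delta_mx_mul_sum (R : pzSemiRingType) (n p : nat) (a b : 'I_n)
    (c : 'I_n -> 'I_n) (f : 'I_n -> 'M[R]_(n, p)) :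
  delta_mx a b *m \sum_i (delta_mx i (c i) *m f i) = delta_mx a (c b) *m f b.
Proof.
rewrite mulmx_sumr (bigD1 b) //= big1 ?addr0; first by rewrite mulmxA mul_delta_mx.
by move=> i hi; rewrite mulmxA mul_delta_mx_cond eq_sym (negbTE hi) mulr0n mul0mx.
Qed.

Definition unit_code {F : fieldType} {V : finType} {d : nat} (u v : V) : 'M[F]_d :=
  1%:M.

Definition supported_code {F : fieldType} {V : finType} {d : nat}
    (S : V -> V -> V -> bool) (M : V -> V -> V -> 'M[F]_d) (w u v : V) : 'M[F]_d :=
  if S u v w then M u v w else 0.

Section SupportedCode.
Variables (F : fieldType) (V : finType) (d : nat) (E : rel V) (src : pred V).
Variables (S : V -> V -> V -> bool) (M : V -> V -> V -> 'M[F]_d).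

Local Notation edge_eqs := (vlnc_edge_eqs E src unit_code (supported_code S M)).

Lemma source_edge msg y u v : edge_eqs msg y -> E u v -> src u -> y u v = msg u.
Proof. by move=> Hy Euv su; case: (Hy u v Euv) => ->; rewrite ?mul1mx. Qed.

Lemma inner_edge msg y u v :
  edge_eqs msg y -> E u v -> ~~ src u -> (forall w, S u v w -> E w u) ->
  y u v = \sum_(w | S u v w) M u v w *m y w u.
Proof.
move=> Hy Euv su sE; have [_ ->] := Hy u v Euv; last exact: su.
rewrite /supported_code; exact: big_masked_mulmx.
Qed.

(* Edge vectors exist for a code of depth two: nodes of [L1] only read
   sources, nodes of [L2] only read non-source nodes of [L1], and all other
   non-source nodes read nothing. *)
Variables (L1 L2 : pred V).
Hypothesis supp_L1 : forall u v w, L1 u -> S u v w -> src w.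
Hypothesis supp_L2 : forall u v w, L2 u -> S u v w -> ~~ src w && L1 w.
Hypothesis supp_out : forall u v w, ~~ L1 u -> ~~ L2 u -> S u v w = false.

Definition layer1_value (msg : V -> 'cV[F]_d) (u v : V) : 'cV[F]_d :=
  \sum_(w | E w u) supported_code S M w u v *m msg w.

Definition layer2_value (msg : V -> 'cV[F]_d) (u v : V) : 'cV[F]_d :=
  \sum_(w | E w u) supported_code S M w u v *m layer1_value msg w u.

Definition layered_value (msg : V -> 'cV[F]_d) (u v : V) : 'cV[F]_d :=
  if src u then msg u
  else if L1 u then layer1_value msg u v
  else if L2 u then layer2_value msg u v
  else 0.

Lemma layered_value_eqs msg : edge_eqs msg (layered_value msg).
Proof.
move=> u v _; split=> [su | nsu]; rewrite [in LHS]/layered_value.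
  by rewrite su /unit_code mul1mx.
rewrite (negbTE nsu); case: ifP => [L1u | nL1u].
  apply: eq_bigr => w _; rewrite /supported_code.
  case: ifP => [Sw | _]; last by rewrite !mul0mx.
  by rewrite /layered_value (supp_L1 L1u Sw).
case: ifP => [L2u | nL2u].
  apply: eq_bigr => w _; rewrite /supported_code.
  case: ifP => [Sw | _]; last by rewrite !mul0mx.
  by case/andP: (supp_L2 L2u Sw) => /negbTE nsw L1w; rewrite /layered_value nsw L1w.
symmetry; apply: big1 => w _.
by rewrite /supported_code supp_out ?mul0mx ?nL1u ?nL2u.
Qed.

End SupportedCode.

(* The eight node kinds are concrete ordinals; rewriting with [kindE] lets
   comparisons between kinds compute. *)
Lemma KxE : Kx = Ordinal (isT : (0 < 8)%N). Proof. exact/val_inj/inordK. Qed.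
Lemma KmE : Km = Ordinal (isT : (1 < 8)%N). Proof. exact/val_inj/inordK. Qed.
Lemma KnE : Kn = Ordinal (isT : (2 < 8)%N). Proof. exact/val_inj/inordK. Qed.
Lemma KrhoE : Krho = Ordinal (isT : (3 < 8)%N). Proof. exact/val_inj/inordK. Qed.
Lemma KsrcE : Ksrc = Ordinal (isT : (4 < 8)%N). Proof. exact/val_inj/inordK. Qed.
Lemma KuE : Ku = Ordinal (isT : (5 < 8)%N). Proof. exact/val_inj/inordK. Qed.
Lemma KvE : Kv = Ordinal (isT : (6 < 8)%N). Proof. exact/val_inj/inordK. Qed.
Lemma KtE : Kt = Ordinal (isT : (7 < 8)%N). Proof. exact/val_inj/inordK. Qed.
Definition kindE := (KxE, KmE, KnE, KrhoE, KsrcE, KuE, KvE, KtE).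

Tactic Notation "edge_block" int_or_var(n) :=
  rewrite /N2_E /N2_edges !mem_cat; do n (apply/orP; right); apply/orP; left.
Ltac by_index k := apply/mapP; exists k; [rewrite mem_iota; lia | ].

Section N2.
Variable q : nat.

Local Notation edge := (@N2_E q).
Local Notation source := (@N2_src q).

Definition ix (u : node q) : nat := u.2.

Lemma ix_nd k i : (i <= q + 27)%N -> ix (nd q k i) = i.
Proof. by move=> hi; rewrite /ix /nd /= inordK // ltnS. Qed.

Lemma ix_le (u : node q) : (ix u <= q + 27)%N.
Proof. by rewrite /ix -ltnS ltn_ord. Qed.

Lemma ndE (u : node q) : u = nd q u.1 (ix u).
Proof. by case: u => k i; rewrite /nd /ix /= inord_val. Qed.

Lemma nd_eq k k' i i' : (i <= q + 27)%N -> (i' <= q + 27)%N ->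
  (nd q k i == nd q k' i') = (k == k') && (i == i').
Proof.
move=> hi hi'; rewrite /nd xpair_eqE; congr (_ && _).
by rewrite -val_eqE /= !inordK // ltnS.
Qed.

Lemma chxE k : (k != 1)%N -> chx q k = nd q Kx k.
Proof. by move=> hk; rewrite /chx (negbTE hk). Qed.

Lemma sa_Kx i : (sa q == nd q Kx i) = false.
Proof. by rewrite /sa /srcM /nd xpair_eqE !kindE. Qed.

Lemma source_srcM j : (1 <= j <= 9)%N -> source (srcM q j).
Proof. by move=> hj; rewrite /N2_src /N2_sources mem_cat map_f // mem_iota; lia. Qed.

Lemma source_Kx i : (2 <= i <= q + 2)%N -> source (nd q Kx i).
Proof. by move=> hi; rewrite /N2_src /N2_sources mem_cat orbC map_f // mem_iota; lia. Qed.

Lemma non_source (u : node q) :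
  [|| u.1 == Km, u.1 == Kn, u.1 == Ku | u.1 == Kv] -> ~~ source u.
Proof.
move=> hk; apply/negP; rewrite /N2_src /N2_sources mem_cat.
by case/orP=> /mapP [j _ eq_u]; move: hk; rewrite eq_u /= !kindE.
Qed.

Lemma edge_sa_mm k : (1 <= k <= q + 1)%N -> edge (sa q) (mm q k).
Proof. by move=> hk; edge_block 0; by_index k. Qed.

Lemma edge_Kx_mm k i : (2 <= k <= q + 2)%N -> (2 <= i <= q + 2)%N -> k != i ->
  edge (nd q Kx k) (mm q i).
Proof.
move=> hk hi hki; edge_block 3; apply/mapP; exists (k, i).
  by rewrite mem_filter hki /=; apply: allpairs_f; rewrite mem_iota; lia.
by rewrite /= chxE //; lia.
Qed.

Lemma edge_mm_nn k : (1 <= k <= q + 3)%N -> edge (mm q k) (nn q k).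
Proof. by move=> hk; edge_block 5; by_index k. Qed.

Lemma edge_nn_rho k : (1 <= k <= q + 2)%N -> edge (nn q k) (rho q k).
Proof. by move=> hk; edge_block 6; by_index k. Qed.

Lemma edge_nn3_rho k : (1 <= k <= q + 2)%N -> edge (nn q (q + 3)) (rho q k).
Proof. by move=> hk; edge_block 7; by_index k. Qed.

Lemma edge_nn_rho3 k : (1 <= k <= q + 2)%N -> edge (nn q k) (rho q (q + 3)).
Proof. by move=> hk; edge_block 8; by_index k. Qed.

Lemma edge_Kx_rho1 k : (2 <= k <= q + 1)%N -> edge (nd q Kx k) (rho q 1).
Proof. by move=> hk; edge_block 9; by_index k; rewrite chxE //; lia. Qed.

Lemma edge_sa_rho : edge (sa q) (rho q (q + 2)).
Proof. by edge_block 10; rewrite inE eqxx. Qed.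

Lemma edge_src_uu g p : (g < 3)%N -> (p < 3)%N ->
  edge (srcM q (3 * g + p + 1)) (uu q (g + 1)).
Proof.
move=> hg hp; edge_block 11; by_index (3 * g + p + 1)%N.
by rewrite (_ : ((3 * g + p + 1 + 2) %/ 3 = g + 1)%N) //; lia.
Qed.

Lemma edge_uu_vv g : (1 <= g <= 3)%N -> edge (uu q g) (vv q g).
Proof. by move=> hg; edge_block 12; by_index g. Qed.

Lemma edge_uu_vv45 g k : (1 <= g <= 3)%N -> (3 < k <= 5)%N -> edge (uu q g) (vv q k).
Proof.
move=> hg hk; have [->|->] : k = 4%N \/ k = 5%N by lia.
  by edge_block 13; by_index g.
by edge_block 14; by_index g.
Qed.

Lemma edge_vv_tt k j : (1 <= k <= 5)%N -> (1 <= j <= 27)%N -> edge (vv q k) (tt q j).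
Proof.
move=> hk hj; edge_block 15; apply/mapP; exists (k, j) => //.
by apply: allpairs_f; rewrite mem_iota; lia.
Qed.


Definition xsrc (w : node q) : bool :=
  (w == sa q) || ((w.1 == Kx) && (2 <= ix w <= q + 2)%N).

Definition m_inputs (i : nat) (w : node q) : bool :=
  if i == 1%N then w == sa q
  else if (i <= q + 1)%N then xsrc w && (w != nd q Kx i)
  else if i == (q + 2)%N then [&& xsrc w, w != sa q & w != nd q Kx (q + 2)]
  else xsrc w.

Definition group_srcs (g : nat) : {set node q} :=
  [set srcM q (3 * g + nat_of_ord p + 1)%N | p : 'I_3].
Definition u_nodes : {set node q} := [set uu q (nat_of_ord g + 1)%N | g : 'I_3].

(* Coordinates of F^3, and the routing data of the M_3 part: the position,
   within G_{g+1}, of the source of that group demanded by t̄_j, and the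
   coordinate of the messages sent from ū_g to v̄_k. *)
Definition pos3 (n : nat) : 'I_3 := inord n.
Definition demanded_pos (j g : nat) : nat := (((j - 1) %/ 3 ^ (2 - g)) %% 3)%N.
Definition v_coord (k : nat) : nat :=
  if k == 4%N then 1%N else if k == 5%N then 2%N else 0%N.

Definition code_supp (u v w : node q) : bool :=
  if u.1 == Km then m_inputs (ix u) w
  else if u.1 == Ku then (1 <= ix u <= 3)%N && (w \in group_srcs (ix u - 1)%N)
  else if u.1 == Kn then w == mm q (ix u)
  else if u.1 == Kv then (if (ix u <= 3)%N then w == uu q (ix u) else w \in u_nodes)
  else false.

Variable F : fieldType.

Definition code_mx (u v w : node q) : 'M[F]_3 :=
  if u.1 == Ku then delta_mx (pos3 ((ix w - 1) %% 3)%N) (pos3 (v_coord (ix v)))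
  else if (u.1 == Kv) && (3 < ix u)%N then
    delta_mx (pos3 (ix w - 1)%N) (pos3 (demanded_pos (ix v) (ix w - 1)%N))
  else 1%:M.

Definition dec_supp (t x u : node q) : bool :=
  if t.1 == Krho then
    if ix t == 1%N then [|| u == nn q (q + 3), u == nn q 1
                          | (u.1 == Kx) && (2 <= ix u <= q + 1)%N]
    else if (ix t <= q + 1)%N then (u == nn q (q + 3)) || (u == nn q (ix t))
    else if ix t == (q + 2)%N then [|| u == nn q (q + 3), u == nn q (q + 2) | u == sa q]
    else u == nn q 1
  else if t.1 == Kt then u \in [:: vv q ((ix x - 1) %/ 3 + 1)%N; vv q 4; vv q 5]
  else false.

Definition dec_mx (t x u : node q) : 'M[F]_3 :=
  if t.1 == Krho then
    (if (u == nn q (q + 3)) || (ix t == q + 3)%N then 1%:M else - 1%:M)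
  else if u == vv q 4 then delta_mx (pos3 1) (pos3 ((ix x - 1) %/ 3)%N)
  else if u == vv q 5 then delta_mx (pos3 2) (pos3 ((ix x - 1) %/ 3)%N)
  else delta_mx (pos3 0) (pos3 ((ix x - 1) %% 3)%N).

Definition decoding (t x u : node q) : 'M[F]_3 :=
  if dec_supp t x u then dec_mx t x u else 0.

Local Notation code := (supported_code code_supp code_mx).
Local Notation edge_eqs := (vlnc_edge_eqs edge source unit_code code).

(* The code has depth two: m_i and ū_g read sources only, n_i and v̄_k read
   nodes m_i and ū_g only. *)
Lemma xsrc_source (w : node q) : xsrc w -> source w.
Proof.
case/orP => [/eqP -> | /andP [/eqP hk hi]]; first exact: source_srcM.
by rewrite (ndE w) hk; apply: source_Kx.
Qed.

Lemma m_inputs_xsrc i (w : node q) : m_inputs i w -> xsrc w.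
Proof.
rewrite /m_inputs; case: ifP => _; first by move/eqP ->; rewrite /xsrc eqxx.
case: ifP => _; first by case/andP.
by case: ifP => _; [case/and3P|].
Qed.

Lemma code_supp_layer1 (u v w : node q) :
  (u.1 == Km) || (u.1 == Ku) -> code_supp u v w -> source w.
Proof.
rewrite /code_supp; case/orP => /eqP ->; rewrite !kindE /=.
  by move/m_inputs_xsrc/xsrc_source.
case/andP => hu /imsetP [p _ ->]; apply: source_srcM; have := ltn_ord p; lia.
Qed.

Lemma code_supp_layer2 (u v w : node q) :
  (u.1 == Kn) || (u.1 == Kv) -> code_supp u v w ->
  ~~ source w && ((w.1 == Km) || (w.1 == Ku)).
Proof.
rewrite /code_supp; case/orP => /eqP ->; rewrite !kindE /=.
  by move/eqP ->; rewrite /= non_source //= !kindE.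
case: ifP => _; first by move/eqP ->; rewrite /= non_source //= !kindE.
by case/imsetP => g _ ->; rewrite /= non_source //= !kindE.
Qed.

Lemma code_supp_out (u v w : node q) :
  ~~ ((u.1 == Km) || (u.1 == Ku)) -> ~~ ((u.1 == Kn) || (u.1 == Kv)) ->
  code_supp u v w = false.
Proof.
rewrite /code_supp; case: (u.1 == Km); case: (u.1 == Ku) => //.
by case: (u.1 == Kn); case: (u.1 == Kv).
Qed.

Lemma N2_edge_values (msg : node q -> 'cV[F]_3) : exists y, edge_eqs msg y.
Proof.
eexists; apply: layered_value_eqs.
- exact: code_supp_layer1.
- exact: code_supp_layer2.
- exact: code_supp_out.
Qed.

Lemma code_supp_mm k (r w : node q) : (k <= q + 27)%N ->
  code_supp (mm q k) r w = m_inputs k w.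
Proof. by move=> hk; rewrite /code_supp /= !kindE /= ix_nd. Qed.

Lemma code_supp_nn k (r w : node q) : (k <= q + 27)%N ->
  code_supp (nn q k) r w = (w == mm q k).
Proof. by move=> hk; rewrite /code_supp /= !kindE /= ix_nd. Qed.

Lemma code_supp_uu g (r w : node q) : (1 <= g <= 3)%N ->
  code_supp (uu q g) r w = (w \in group_srcs (g - 1)).
Proof. by move=> hg; rewrite /code_supp /= !kindE /= ix_nd ?hg //; lia. Qed.

Lemma code_supp_vv k (r w : node q) : (k <= 3)%N ->
  code_supp (vv q k) r w = (w == uu q k).
Proof. by move=> hk; rewrite /code_supp /= !kindE /= ix_nd ?hk //; lia. Qed.

Lemma code_supp_vv45 k (r w : node q) : (3 < k <= 5)%N ->
  code_supp (vv q k) r w = (w \in u_nodes).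
Proof. by move=> hk; rewrite /code_supp /= !kindE /= ix_nd ?ifN //; lia. Qed.

Lemma code_mx_mm k (r w : node q) : code_mx (mm q k) r w = 1%:M.
Proof. by rewrite /code_mx /= !kindE. Qed.

Lemma code_mx_nn k (r w : node q) : code_mx (nn q k) r w = 1%:M.
Proof. by rewrite /code_mx /= !kindE. Qed.

Lemma code_mx_uu g (r w : node q) :
  code_mx (uu q g) r w = delta_mx (pos3 ((ix w - 1) %% 3)%N) (pos3 (v_coord (ix r))).
Proof. by rewrite /code_mx /= !kindE. Qed.

Lemma code_mx_vv k (r w : node q) : (k <= 3)%N -> code_mx (vv q k) r w = 1%:M.
Proof. by move=> hk; rewrite /code_mx /= !kindE /= ix_nd ?ltnNge ?hk //; lia. Qed.

Lemma code_mx_vv45 k (r w : node q) : (3 < k <= 5)%N ->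
  code_mx (vv q k) r w =
    delta_mx (pos3 (ix w - 1)%N) (pos3 (demanded_pos (ix r) (ix w - 1)%N)).
Proof. by move=> hk; rewrite /code_mx /= !kindE /= ix_nd ?ifT //; lia. Qed.

Lemma m_inputs_mid i (w : node q) : (2 <= i <= q + 1)%N ->
  m_inputs i w = xsrc w && (w != nd q Kx i).
Proof. by move=> hi; rewrite /m_inputs; case: ifP => h1; [lia|]; case: ifP => h2; [|lia]. Qed.

Lemma m_inputs_q2 (w : node q) :
  m_inputs (q + 2) w = [&& xsrc w, w != sa q & w != nd q Kx (q + 2)].
Proof. by rewrite /m_inputs; case: ifP => h1; [lia|]; case: ifP => h2; [lia|]; rewrite eqxx. Qed.

Lemma m_inputs_q3 (w : node q) : m_inputs (q + 3) w = xsrc w.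
Proof.
by rewrite /m_inputs; case: ifP => h1; [lia|]; case: ifP => h2; [lia|]; case: ifP => h3 //; lia.
Qed.

Lemma xsrc_Kx i : (2 <= i <= q + 2)%N -> xsrc (nd q Kx i).
Proof. by move=> hi; rewrite /xsrc /= ix_nd ?hi ?eqxx ?orbT //; lia. Qed.

Lemma xsrc_middle (w : node q) :
  [&& xsrc w, w != sa q & w != nd q Kx (q + 2)] = (w.1 == Kx) && (2 <= ix w <= q + 1)%N.
Proof.
rewrite /xsrc; case: (eqVneq w (sa q)) => [-> | hs] /=; first by rewrite !kindE.
case hk: (w.1 == Kx) => //=.
rewrite [w in w != _](ndE w) (eqP hk) nd_eq ?ix_le //; last lia.
by rewrite eqxx /=; apply/idP/idP; lia.
Qed.

Lemma xsrc_sum (W : nmodType) (f : node q -> W) :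
  \sum_(w | xsrc w) f w = f (sa q) + (f (nd q Kx (q + 2)) +
     \sum_(w | [&& xsrc w, w != sa q & w != nd q Kx (q + 2)]) f w).
Proof.
rewrite (bigD1 (sa q)) /=; last by rewrite /xsrc eqxx.
rewrite (bigD1 (nd q Kx (q + 2))) /=; last by rewrite xsrc_Kx; [rewrite eq_sym sa_Kx | lia].
by congr (_ + (_ + _)); apply: eq_bigl => w; rewrite andbA.
Qed.

Lemma nn_eq i j : (i <= q + 27)%N -> (j <= q + 27)%N -> (nn q i == nn q j) = (i == j).
Proof. by move=> hi hj; rewrite /nn nd_eq // eqxx. Qed.

Lemma vv_eq i j : (i <= q + 27)%N -> (j <= q + 27)%N -> (vv q i == vv q j) = (i == j).
Proof. by move=> hi hj; rewrite /vv nd_eq // eqxx. Qed.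

Lemma dec_supp_rho i (x u : node q) : (i <= q + 27)%N ->
  dec_supp (rho q i) x u =
    if i == 1%N then [|| u == nn q (q + 3), u == nn q 1
                          | (u.1 == Kx) && (2 <= ix u <= q + 1)%N]
    else if (i <= q + 1)%N then (u == nn q (q + 3)) || (u == nn q i)
    else if i == (q + 2)%N then [|| u == nn q (q + 3), u == nn q (q + 2) | u == sa q]
    else u == nn q 1.
Proof. by move=> hi; rewrite /dec_supp /= !kindE /= ix_nd. Qed.

Lemma dec_supp_rho1 (x u : node q) : dec_supp (rho q 1) x u =
  [|| u == nn q (q + 3), u == nn q 1 | (u.1 == Kx) && (2 <= ix u <= q + 1)%N].
Proof. by rewrite dec_supp_rho //; lia. Qed.

Lemma dec_supp_rho_mid i (x u : node q) : (2 <= i <= q + 1)%N ->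
  dec_supp (rho q i) x u = (u == nn q (q + 3)) || (u == nn q i).
Proof.
by move=> hi; rewrite dec_supp_rho; [case: ifP => h1; [lia|]; case: ifP => h2; [|lia] | lia].
Qed.

Lemma dec_supp_rho2 (x u : node q) :
  dec_supp (rho q (q + 2)) x u = [|| u == nn q (q + 3), u == nn q (q + 2) | u == sa q].
Proof.
by rewrite dec_supp_rho; [case: ifP => h1; [lia|]; case: ifP => h2; [lia|]; rewrite eqxx | lia].
Qed.

Lemma dec_supp_rho3 (x u : node q) : dec_supp (rho q (q + 3)) x u = (u == nn q 1).
Proof.
rewrite dec_supp_rho; last lia.
by case: ifP => h1; [lia|]; case: ifP => h2; [lia|]; case: ifP => h3 //; lia.
Qed.

Lemma dec_mx_rho i (x u : node q) : (i <= q + 27)%N ->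
  dec_mx (rho q i) x u = if (u == nn q (q + 3)) || (i == q + 3)%N then 1%:M else - 1%:M.
Proof. by move=> hi; rewrite /dec_mx /= !kindE /= ix_nd. Qed.

Lemma dec_supp_tt j (x u : node q) :
  dec_supp (tt q j) x u = (u \in [:: vv q ((ix x - 1) %/ 3 + 1)%N; vv q 4; vv q 5]).
Proof. by rewrite /dec_supp /= ifF ?eqxx // !kindE. Qed.

Lemma dec_mx_tt j (x u : node q) : dec_mx (tt q j) x u =
  if u == vv q 4 then delta_mx (pos3 1) (pos3 ((ix x - 1) %/ 3)%N)
  else if u == vv q 5 then delta_mx (pos3 2) (pos3 ((ix x - 1) %/ 3)%N)
  else delta_mx (pos3 0) (pos3 ((ix x - 1) %% 3)%N).
Proof. by rewrite /dec_mx /= ifF // !kindE. Qed.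

Lemma pos3K (p : 'I_3) : pos3 p = p.
Proof. exact: inord_val. Qed.

Lemma pos3_diag_sum (R : pzSemiRingType) :
  delta_mx (pos3 0) (pos3 0) + (delta_mx (pos3 1) (pos3 1) + delta_mx (pos3 2) (pos3 2))
    = 1%:M :> 'M[R]_3.
Proof.
rewrite (mx1_sum_delta R 3) !big_ord_recl big_ord0 addr0.
by congr (delta_mx _ _ + (delta_mx _ _ + delta_mx _ _)); apply/val_inj; rewrite /= inordK.
Qed.

Lemma v_coord_low (g : 'I_3) : v_coord (g + 1)%N = 0%N.
Proof. by have := ltn_ord g; rewrite /v_coord; case: ifP => h1; [lia|]; case: ifP; lia. Qed.

Lemma srcM_inj g (A : {pred 'I_3}) : (g < 3)%N ->
  {in A &, injective (fun p : 'I_3 => srcM q (3 * g + p + 1)%N)}.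
Proof.
move=> hg p p' _ _ /eqP; rewrite /srcM nd_eq; try (have := ltn_ord p; have := ltn_ord p'; lia).
by case/andP => _ /eqP h; apply/val_inj; rewrite /=; lia.
Qed.

Lemma uu_inj (A : {pred 'I_3}) : {in A &, injective (fun g : 'I_3 => uu q (g + 1)%N)}.
Proof.
move=> g g' _ _ /eqP; rewrite /uu nd_eq; try (have := ltn_ord g; have := ltn_ord g'; lia).
by case/andP => _ /eqP h; apply/val_inj; rewrite /=; lia.
Qed.

Section EdgeValues.
Variables (msg : node q -> 'cV[F]_3) (y : node q -> node q -> 'cV[F]_3).
Hypothesis Hy : edge_eqs msg y.

Lemma m_inputs_edge k (w : node q) : (1 <= k <= q + 3)%N ->
  m_inputs k w -> edge w (mm q k).
Proof.
move=> hk; rewrite /m_inputs; case: ifP => [/eqP -> /eqP -> | h1].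
  by apply: edge_sa_mm; lia.
have Xmm w' i : (2 <= i <= q + 2)%N -> xsrc w' -> w' != nd q Kx i -> w' != sa q ->
    edge w' (mm q i).
  move=> hi /orP [/eqP -> | /andP [/eqP hw hr]]; first by rewrite eqxx.
  rewrite (ndE w') hw nd_eq ?ix_le //; last lia.
  by rewrite eqxx /= => hne _; apply: edge_Kx_mm => //; lia.
case: ifP => h2.
  case/andP => hX hne; case: (eqVneq w (sa q)) => [-> | hsa].
    by apply: edge_sa_mm; lia.
  by apply: Xmm => //; lia.
case: ifP => [/eqP -> | h3]; first by case/and3P => hX hsa hne; apply: Xmm => //; lia.
have -> : k = (q + 3)%N by lia.
case/orP => [/eqP -> | /andP [/eqP hw hr]]; first by edge_block 4; by_index 1%N.
by rewrite (ndE w) hw; edge_block 4; by_index (ix w); rewrite chxE //; lia.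
Qed.

Lemma value_mm k : (1 <= k <= q + 3)%N ->
  y (mm q k) (nn q k) = \sum_(w | m_inputs k w) msg w.
Proof.
move=> hk; rewrite (inner_edge Hy (edge_mm_nn hk)); first last.
- by move=> w; rewrite code_supp_mm; [apply: m_inputs_edge | lia].
- by apply: non_source; rewrite /= !kindE.
rewrite (eq_bigl _ _ (fun w => code_supp_mm _ _ _)); last lia.
apply: eq_bigr => w hw; rewrite code_mx_mm mul1mx.
exact: (source_edge Hy (m_inputs_edge hk hw) (xsrc_source (m_inputs_xsrc hw))).
Qed.

Lemma value_nn k r : (1 <= k <= q + 3)%N -> edge (nn q k) r ->
  y (nn q k) r = \sum_(w | m_inputs k w) msg w.
Proof.
move=> hk hE; rewrite (inner_edge Hy hE); first last.
- by move=> w; rewrite code_supp_nn; [move/eqP ->; apply: edge_mm_nn | lia].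
- by apply: non_source; rewrite /= !kindE.
rewrite (eq_bigl _ _ (fun w => code_supp_nn _ _ _)); last lia.
by rewrite big_pred1_eq code_mx_nn mul1mx value_mm.
Qed.


(* ρ_i with 2 <= i <= q'+1 computes n_{q'+3} - n_i = ΣX - Σ(X \ {x_i}) = x_i. *)
Lemma decode_rho_mid i x : (2 <= i <= q + 1)%N ->
  \sum_(u | edge u (rho q i)) decoding (rho q i) x u *m y u (rho q i) = msg (nd q Kx i).
Proof.
move=> hi; rewrite /decoding big_masked_mulmx; last first.
  move=> u; rewrite dec_supp_rho_mid //.
  by case/orP => /eqP ->; [apply: edge_nn3_rho | apply: edge_nn_rho]; lia.
rewrite (eq_bigl _ _ (fun u => dec_supp_rho_mid _ _ hi)).
rewrite (bigD1 (nn q (q + 3))) ?eqxx //=.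
rewrite (eq_bigl (fun u => u == nn q i)); last first.
  move=> u; case: (eqVneq u (nn q i)) => [-> | hne]; last by rewrite orbF andbN.
  by rewrite orbT andTb nn_eq; lia.
rewrite big_pred1_eq !dec_mx_rho; try lia.
have hne : (i == q + 3)%N = false by lia.
rewrite eqxx /= nn_eq ?hne /=; try lia.
rewrite mul1mx mulNmx mul1mx.
rewrite (value_nn _ (edge_nn3_rho _)); try lia.
rewrite (value_nn _ (edge_nn_rho _)); try lia.
rewrite (eq_bigl _ _ m_inputs_q3) (eq_bigl _ _ (fun w => m_inputs_mid w hi)).
rewrite (bigD1 (nd q Kx i)) /=; last by apply: xsrc_Kx; lia.
by rewrite addrK.
Qed.

(* ρ_1 computes n_{q'+3} - n_1 - (x_2 + ... + x_{q'+1}) = x_{q'+2}. *)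
Lemma decode_rho1 x :
  \sum_(u | edge u (rho q 1)) decoding (rho q 1) x u *m y u (rho q 1)
    = msg (nd q Kx (q + 2)).
Proof.
rewrite /decoding big_masked_mulmx; last first.
  move=> u; rewrite dec_supp_rho1; case/or3P => [/eqP -> | /eqP -> | /andP [/eqP hk hr]].
  - by apply: edge_nn3_rho; lia.
  - by apply: edge_nn_rho; lia.
  by rewrite (ndE u) hk; apply: edge_Kx_rho1.
rewrite (eq_bigl _ _ (fun u => dec_supp_rho1 _ _)).
rewrite (bigD1 (nn q (q + 3))) ?eqxx //=.
rewrite (bigD1 (nn q 1)) /=; last by rewrite eqxx orbT nn_eq //; lia.
rewrite (eq_bigl (fun u => (u.1 == Kx) && (2 <= ix u <= q + 1)%N)); last first.
  move=> u; case: (eqVneq u (nn q (q + 3))) => [-> | h1] /=; first by rewrite !kindE.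
  by case: (eqVneq u (nn q 1)) => [-> | h2] /=; [rewrite !kindE | rewrite !andbT].
rewrite !dec_mx_rho; try lia.
have h13 : (1 == q + 3)%N = false by lia.
rewrite eqxx /= nn_eq // ?h13 /=; try lia.
rewrite mul1mx mulNmx mul1mx.
rewrite (value_nn _ (edge_nn3_rho _)); try lia.
rewrite (value_nn _ (edge_nn_rho _)); try lia.
have middle : \sum_(u | (u.1 == Kx) && (2 <= ix u <= q + 1)%N)
      dec_mx (rho q 1) x u *m y u (rho q 1)
    = - \sum_(u | (u.1 == Kx) && (2 <= ix u <= q + 1)%N) msg u.
  rewrite -sumrN; apply: eq_bigr => u /and3P [/eqP hk hr1 hr2].
  have hu : u = nd q Kx (ix u) by rewrite [LHS]ndE hk.
  have not_n : (u == nn q (q + 3)) = false.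
    by rewrite hu /nn nd_eq ?ix_le ?kindE //; lia.
  rewrite dec_mx_rho; last lia.
  rewrite not_n h13 /= mulNmx mul1mx hu.
  rewrite (source_edge Hy (edge_Kx_rho1 _)) ?hr1 ?hr2 //; apply: source_Kx; lia.
rewrite middle (eq_bigl _ _ m_inputs_q3) big_pred1_eq xsrc_sum.
by rewrite (eq_bigl _ _ xsrc_middle) -opprD addrCA addrK.
Qed.

(* ρ_{q'+2} computes n_{q'+3} - n_{q'+2} - x_1 = x_{q'+2}. *)
Lemma decode_rho2 x :
  \sum_(u | edge u (rho q (q + 2))) decoding (rho q (q + 2)) x u *m y u (rho q (q + 2))
    = msg (nd q Kx (q + 2)).
Proof.
have sa_nn i : (sa q == nn q i) = false by rewrite /sa /srcM /nd !xpair_eqE !kindE.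
rewrite /decoding big_masked_mulmx; last first.
  move=> u; rewrite dec_supp_rho2; case/or3P => /eqP ->.
  - by apply: edge_nn3_rho; lia.
  - by apply: edge_nn_rho; lia.
  exact: edge_sa_rho.
rewrite (eq_bigl _ _ (fun u => dec_supp_rho2 _ _)).
rewrite (bigD1 (nn q (q + 3))) ?eqxx //=.
rewrite (bigD1 (nn q (q + 2))) /=; last by rewrite eqxx orbT nn_eq //; lia.
rewrite (eq_bigl (fun u => u == sa q)); last first.
  move=> u; case: (eqVneq u (nn q (q + 3))) => [-> | h3] /=; first by rewrite eq_sym sa_nn.
  case: (eqVneq u (nn q (q + 2))) => [-> | h2] /=; first by rewrite eq_sym sa_nn.
  by rewrite !andbT.
rewrite big_pred1_eq !dec_mx_rho; try lia.
have h1 : (q + 2 == q + 3)%N = false by lia.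
rewrite eqxx /= nn_eq // ?h1 ?sa_nn /=; try lia.
rewrite mul1mx !mulNmx !mul1mx.
rewrite (value_nn _ (edge_nn3_rho _)); try lia.
rewrite (value_nn _ (edge_nn_rho _)); try lia.
rewrite (source_edge Hy edge_sa_rho); last exact: source_srcM.
rewrite (eq_bigl _ _ m_inputs_q3) (eq_bigl _ _ m_inputs_q2) xsrc_sum.
set s := \sum_(w | _) msg w.
by rewrite -opprD (addrC s) addrCA addrK.
Qed.

Lemma decode_rho3 x :
  \sum_(u | edge u (rho q (q + 3))) decoding (rho q (q + 3)) x u *m y u (rho q (q + 3))
    = msg (sa q).
Proof.
rewrite /decoding big_masked_mulmx; last first.
  by move=> u; rewrite dec_supp_rho3 => /eqP ->; apply: edge_nn_rho3; lia.
rewrite (eq_bigl _ _ (fun u => dec_supp_rho3 _ _)) big_pred1_eq dec_mx_rho; last lia.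
rewrite eqxx orbT mul1mx (value_nn _ (edge_nn_rho3 _)) ?big_pred1_eq //; lia.
Qed.

Lemma value_uu (g : 'I_3) k : (k <= 27)%N -> edge (uu q (g + 1)%N) (vv q k) ->
  y (uu q (g + 1)%N) (vv q k) =
    \sum_(p : 'I_3) delta_mx p (pos3 (v_coord k)) *m msg (srcM q (3 * g + p + 1)%N).
Proof.
move=> hk hE; have hg := ltn_ord g.
have g_idx : (g + 1 - 1 = g)%N by lia.
rewrite (inner_edge Hy hE); first last.
- move=> w; rewrite code_supp_uu ?g_idx; last lia.
  by case/imsetP => p _ ->; apply: edge_src_uu.
- by apply: non_source; rewrite /= !kindE.
rewrite (eq_bigl _ _ (fun w => code_supp_uu _ _ _)) ?g_idx; last lia.
rewrite /group_srcs big_imset /=; last exact: srcM_inj.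
apply: eq_bigr => p _; have hp := ltn_ord p.
rewrite code_mx_uu ix_nd; last lia.
rewrite ix_nd; last lia.
rewrite (_ : ((3 * g + p + 1 - 1) %% 3 = p)%N); last lia.
rewrite pos3K (source_edge Hy (edge_src_uu hg hp)) //.
by apply: source_srcM; lia.
Qed.

Lemma value_vv_low (g : 'I_3) r : edge (vv q (g + 1)%N) r ->
  y (vv q (g + 1)%N) r = y (uu q (g + 1)%N) (vv q (g + 1)%N).
Proof.
move=> hE; have hg := ltn_ord g.
rewrite (inner_edge Hy hE); first last.
- by move=> w; rewrite code_supp_vv; [move/eqP ->; apply: edge_uu_vv | ]; lia.
- by apply: non_source; rewrite /= !kindE.
rewrite (eq_bigl _ _ (fun w => code_supp_vv _ _ _)); last lia.
by rewrite big_pred1_eq code_mx_vv ?mul1mx //; lia.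
Qed.

(* v̄_4 and v̄_5 put in entry g the entry of ū_{g+1}'s vector at the
   position of the source of G_{g+1} demanded by t̄_j. *)
Lemma value_vv45 k j : (3 < k <= 5)%N -> (j <= 27)%N -> edge (vv q k) (tt q j) ->
  y (vv q k) (tt q j) =
    \sum_(g : 'I_3) delta_mx g (pos3 (demanded_pos j g)) *m y (uu q (g + 1)%N) (vv q k).
Proof.
move=> hk hj hE.
rewrite (inner_edge Hy hE); first last.
- move=> w; rewrite code_supp_vv45 //; case/imsetP => g _ ->.
  by apply: edge_uu_vv45 => //; have := ltn_ord g; lia.
- by apply: non_source; rewrite /= !kindE.
rewrite (eq_bigl _ _ (fun w => code_supp_vv45 _ _ hk)).
rewrite /u_nodes big_imset /=; last exact: uu_inj.
apply: eq_bigr => g _; have hg := ltn_ord g.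
rewrite code_mx_vv45 // !ix_nd; try lia.
by rewrite (_ : (g + 1 - 1 = g)%N) ?pos3K //; lia.
Qed.

(* t̄_j recovers the message of position p in G_{g+1} from its 0-th, 1st and
   2nd coordinates, read on v̄_{g+1}, v̄_4 and v̄_5. *)
Lemma decode_tt j (g p : 'I_3) : (1 <= j <= 27)%N -> demanded_pos j g = p ->
  \sum_(u | edge u (tt q j)) decoding (tt q j) (srcM q (3 * g + p + 1)%N) u *m y u (tt q j)
    = msg (srcM q (3 * g + p + 1)%N).
Proof.
move=> hj hpos; have hg := ltn_ord g; have hp := ltn_ord p.
set x := srcM q (3 * g + p + 1)%N.
have hix : ix x = (3 * g + p + 1)%N by rewrite /x ix_nd //; lia.
have hdiv : ((ix x - 1) %/ 3 = g)%N by rewrite hix; lia.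
have hmod : ((ix x - 1) %% 3 = p)%N by rewrite hix; lia.
have h4 : (g + 1 == 4)%N = false by lia.
have h5 : (g + 1 == 5)%N = false by lia.
rewrite /decoding big_masked_mulmx; last first.
  move=> u; rewrite dec_supp_tt hdiv !inE; case/or3P => /eqP ->; apply: edge_vv_tt; lia.
rewrite (eq_bigl _ _ (fun u => dec_supp_tt _ _ _)) hdiv -big_uniq; last first.
  by rewrite /= !inE !vv_eq ?h4 ?h5 //; lia.
rewrite !big_cons big_nil /= addr0 !dec_mx_tt eqxx !vv_eq ?h4 ?h5 /=; try lia.
rewrite hdiv hmod !pos3K (value_vv_low (edge_vv_tt _ hj)); last lia.
rewrite value_uu; [| lia | apply: edge_uu_vv; lia].
have value_uu45 k (g' : 'I_3) : (3 < k <= 5)%N ->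
    y (uu q (g' + 1)%N) (vv q k) =
    \sum_(p0 : 'I_3) delta_mx p0 (pos3 (v_coord k)) *m msg (srcM q (3 * g' + p0 + 1)%N).
  move=> hk; have hg' := ltn_ord g'; apply: value_uu; first lia.
  by apply: edge_uu_vv45; lia.
rewrite !(value_vv45 _ _ (edge_vv_tt _ hj)); try lia.
rewrite v_coord_low !delta_mx_mul_sum !value_uu45 // hpos pos3K !delta_mx_mul_sum /v_coord /=.
by rewrite -!mulmxDl pos3_diag_sum mul1mx.
Qed.

Lemma decode_triple (a b c : nat) x :
  (a < 3)%N -> (b < 3)%N -> (c < 3)%N ->
  x \in [:: srcM q (a + 1); srcM q (b + 4); srcM q (c + 7)] ->
  \sum_(u | edge u (tt q (9 * a + 3 * b + c + 1))) decoding (tt q (9 * a + 3 * b + c + 1)) x u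
     *m y u (tt q (9 * a + 3 * b + c + 1)) = msg x.
Proof.
move=> ha hb hc; rewrite !inE; case/or3P => /eqP ->.
- have -> : srcM q (a + 1) = srcM q (3 * (@Ordinal 3 0 isT) + (@Ordinal 3 a ha) + 1).
    by congr (srcM q _); rewrite /=; lia.
  apply: decode_tt; first lia.
  rewrite /demanded_pos (_ : (3 ^ (2 - 0) = 9)%N) //.
  rewrite (_ : (9 * a + 3 * b + c + 1 - 1 = a * 9 + (3 * b + c))%N); last lia.
  by rewrite divnMDl // divn_small ?addn0 ?modn_small //; lia.
- have -> : srcM q (b + 4) = srcM q (3 * (@Ordinal 3 1 isT) + (@Ordinal 3 b hb) + 1).
    by congr (srcM q _); rewrite /=; lia.
  apply: decode_tt; first lia.
  rewrite /demanded_pos (_ : (3 ^ (2 - 1) = 3)%N) //.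
  rewrite (_ : (9 * a + 3 * b + c + 1 - 1 = (3 * a + b) * 3 + c)%N); last lia.
  rewrite divnMDl // divn_small ?addn0 // (_ : (3 * a + b = a * 3 + b)%N); last lia.
  by rewrite modnMDl modn_small.
- have -> : srcM q (c + 7) = srcM q (3 * (@Ordinal 3 2 isT) + (@Ordinal 3 c hc) + 1).
    by congr (srcM q _); rewrite /=; lia.
  apply: decode_tt; first lia.
  rewrite /demanded_pos (_ : (3 ^ (2 - 2) = 1)%N) // divn1.
  rewrite (_ : (9 * a + 3 * b + c + 1 - 1 = (3 * a + b) * 3 + c)%N); last lia.
  by rewrite modnMDl modn_small.
Qed.

Lemma decode_rho_x i : (2 <= i <= q + 2)%N ->
  \sum_(u | edge u (rho q i)) decoding (rho q i) (chx q i) u *m y u (rho q i)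
    = msg (chx q i).
Proof.
move=> hi; rewrite chxE; last lia.
have [hi2 | hi2] := leqP i (q + 1); first by apply: decode_rho_mid; lia.
have -> : i = (q + 2)%N by lia.
exact: decode_rho2.
Qed.

End EdgeValues.

End N2.

Local Close Scope ring_scope.

Theorem lemma10 (q : nat) (hq : (2 <= q)%N) (F : finFieldType) :
  has_VLNC_solution F 3 (@N2_E q) (@N2_src q) (@N2_dem q).
Proof.
exists unit_code, (supported_code (@code_supp q) (@code_mx q F)), (@decoding q F).
move=> msg; split; first exact: N2_edge_values.
move=> y Hy t x; rewrite /N2_dem /N2_demands 3!mem_cat; case/or4P.
- rewrite inE xpair_eqE => /andP [/eqP -> /eqP ->].
  by rewrite chxE; [exact: decode_rho1 | lia].
- by case/mapP => i; rewrite mem_iota => hi [-> ->]; apply: decode_rho_x => //; lia.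
- by rewrite inE xpair_eqE => /andP [/eqP -> /eqP ->]; exact: decode_rho3.
case/flatten_mapP => p /allpairsP [[ab c] [/allpairsP [[a b] [ha hb ->]] hc ->]].
rewrite !mem_iota /= in ha hb hc; rewrite /= !inE => hd.
have [-> hx] : t = tt q (9 * a + 3 * b + c + 1) /\
    x \in [:: srcM q (a + 1); srcM q (b + 4); srcM q (c + 7)].
  by case/or3P: hd; rewrite xpair_eqE => /andP [/eqP -> /eqP ->]; rewrite !inE eqxx ?orbT.
by apply: decode_triple => //; lia.
Qed.
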